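(* Let $n\ge2$ and let $\Lambda:B(\mathcal{H}_n)\to B(\mathcal{H}_m)$ be a positive linear map. Then $\Lambda$ is $2$-positive if and only if $(\mathbf{1}_2\otimes\Lambda)(|\Psi^\beta\rangle\langle\Psi^\beta|)\ge0$ for all vectors $|\Psi^\beta\rangle=|0\rangle|\beta_0\rangle+|1\rangle|\beta_1\rangle\in\mathcal{H}_2\otimes\mathcal{H}_n$ with $|\beta_0\rangle,|\beta_1\rangle$ orthonormal.
   Context: $B(\mathcal{H}_n)$ is the algebra of operators on an $n$-dimensional Hilbert space; $\{|0\rangle,|1\rangle\}$ is an orthonormal basis of $\mathcal{H}_2$. A linear map $\Lambda$ is positive if it maps positive semidefinite operators to positive semidefinite operators, and $2$-positive if $\mathbf{1}_2\otimes\Lambda$ is positive, where $\mathbf{1}_2$ is the identity map on $B(\mathcal{H}_2)$. *)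

From HB Require Import structures.
From mathcomp Require Import all_boot all_order all_algebra.
Set Implicit Arguments. Unset Strict Implicit. Unset Printing Implicit Defensive.
Import Order.TTheory GRing.Theory Num.Theory.
Local Open Scope ring_scope.

(* Scalars: any numeric algebraically closed field C (e.g. complex numbers);
   B(H_n) is 'M[C]_n. H_2 (x) H_n is C^(n+n) with basis |0>|j> = first block,
   |1>|j> = second block. *)

Definition mxadj (C : numClosedFieldType) (p q : nat) (A : 'M[C]_(p, q)) : 'M[C]_(q, p) :=
  (map_mx Num.conj A)^T.

Definition psd (C : numClosedFieldType) (p : nat) (A : 'M[C]_p) : Prop :=
  forall v : 'cV[C]_p, 0 <= (mxadj v *m A *m v) 0 0.

Definition positive_map (C : numClosedFieldType) (n m : nat)
  (L : 'M[C]_n -> 'M[C]_m) : Prop :=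
  forall X : 'M[C]_n, psd X -> psd (L X).

(* (1_2 (x) L) acting on X = sum_{ij} |i><j| (x) X_ij, written in 2x2 blocks *)
Definition id2_tensor (C : numClosedFieldType) (n m : nat)
  (L : 'M[C]_n -> 'M[C]_m) (X : 'M[C]_(n + n)) : 'M[C]_(m + m) :=
  block_mx (L (ulsubmx X)) (L (ursubmx X)) (L (dlsubmx X)) (L (drsubmx X)).

Definition two_positive (C : numClosedFieldType) (n m : nat)
  (L : 'M[C]_n -> 'M[C]_m) : Prop :=
  forall X : 'M[C]_(n + n), psd X -> psd (id2_tensor L X).

Definition orthonormal2 (C : numClosedFieldType) (n : nat) (b0 b1 : 'cV[C]_n) : Prop :=
  mxadj b0 *m b0 = 1%:M /\ mxadj b1 *m b1 = 1%:M /\ mxadj b0 *m b1 = 0.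

(* A positive semidefinite X factors as B B^*,
   i.e. X is a sum of rank-one operators |phi><phi|, and 1_2 (x) L is additive,
   so it suffices to treat X = |phi><phi|.  Write phi = |0>|a0> + |1>|a1>; since
   n >= 2, Gram-Schmidt gives orthonormal b0, b1 spanning a0, a1, hence
   phi = (T (x) 1) Psi^b for some 2x2 matrix T.  Finally 1_2 (x) L commutes with
   the congruence Y |-> (T (x) 1) Y (T (x) 1)^*, which preserves positivity. *)

From HB Require Import structures.
From mathcomp Require Import all_boot all_order all_algebra spectral ring.
Set Implicit Arguments. Unset Strict Implicit. Unset Printing Implicit Defensive.
Import Order.TTheory GRing.Theory Num.Theory.
Local Open Scope ring_scope.
Local Open Scope sesquilinear_scope.

Section Adjoint.
Variable C : numClosedFieldType.
Implicit Types p q r : nat.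

Lemma mxadjE p q (A : 'M[C]_(p, q)) : mxadj A = A ^t*.
Proof. exact: map_trmx. Qed.

Lemma mxadj_mul p q r (A : 'M[C]_(p, q)) (B : 'M[C]_(q, r)) :
  mxadj (A *m B) = mxadj B *m mxadj A.
Proof. by rewrite /mxadj map_mxM trmx_mul. Qed.

Lemma mxadjK p q (A : 'M[C]_(p, q)) : mxadj (mxadj A) = A.
Proof. by apply/matrixP => i j; rewrite !mxE conjCK. Qed.

Lemma mxadjD p q (A B : 'M[C]_(p, q)) : mxadj (A + B) = mxadj A + mxadj B.
Proof. by apply/matrixP => i j; rewrite !mxE rmorphD. Qed.

Lemma mxadjZ p q a (A : 'M[C]_(p, q)) : mxadj (a *: A) = a^* *: mxadj A.
Proof. by apply/matrixP => i j; rewrite !mxE rmorphM. Qed.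

Lemma mxadj_scalar p a : mxadj (a%:M : 'M[C]_p) = a^*%:M.
Proof. by apply/matrixP => i j; rewrite !mxE rmorphMn eq_sym. Qed.

Lemma mxadj_delta p q i j : mxadj (delta_mx i j : 'M[C]_(p, q)) = delta_mx j i.
Proof. by apply/matrixP => k l; rewrite !mxE rmorph_nat andbC. Qed.

Lemma mxadj_block p1 p2 q1 q2 (Aul : 'M[C]_(p1, q1)) (Aur : 'M[C]_(p1, q2))
    (Adl : 'M[C]_(p2, q1)) (Adr : 'M[C]_(p2, q2)) :
  mxadj (block_mx Aul Aur Adl Adr) =
  block_mx (mxadj Aul) (mxadj Adl) (mxadj Aur) (mxadj Adr).
Proof. by rewrite /mxadj map_block_mx tr_block_mx. Qed.

Lemma mxadj11 (A : 'M[C]_1) : mxadj A 0 0 = (A 0 0)^*.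
Proof. by rewrite !mxE. Qed.

Lemma mulmx_adj_sum_col p q (B : 'M[C]_(p, q)) :
  B *m mxadj B = \sum_i col i B *m mxadj (col i B).
Proof.
apply/matrixP => i j; rewrite !mxE summxE; apply: eq_bigr => k _.
by rewrite !mxE big_ord1 !mxE.
Qed.

End Adjoint.

Section Psd.
Variable C : numClosedFieldType.
Implicit Types p q : nat.

Definition sform p (A : 'M[C]_p) (u v : 'cV[C]_p) := (mxadj u *m A *m v) 0 0.
Definition qform p (A : 'M[C]_p) (v : 'cV[C]_p) := sform A v v.

Lemma qform_adj p (A : 'M[C]_p) v : qform (mxadj A) v = (qform A v)^*.
Proof. by rewrite /qform /sform -mxadj11 !mxadj_mul mxadjK mulmxA. Qed.

Lemma qformB p (A B : 'M[C]_p) v : qform (A - B) v = qform A v - qform B v.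
Proof. by rewrite /qform /sform mulmxBr mulmxBl mxE [(- _ : 'M_1) 0 0]mxE. Qed.

Lemma sform_delta p (A : 'M[C]_p) i j :
  sform A (delta_mx i 0) (delta_mx j 0) = A i j.
Proof. by rewrite /sform mxadj_delta -rowE -colE !mxE. Qed.

Lemma qformDZ p (A : 'M[C]_p) u v c :
  qform A (u + c *: v) =
  qform A u + c * sform A u v + c^* * sform A v u + c^* * c * qform A v.
Proof.
rewrite /qform /sform mxadjD mxadjZ !(mulmxDl, mulmxDr).
by rewrite -!(scalemxAl, scalemxAr) !mxE; ring.
Qed.

Lemma qform_eq0 p (A : 'M[C]_p) : (forall v, qform A v = 0) -> A = 0.
Proof.
move=> A0; apply/matrixP => i j; rewrite mxE.
have offdiag c : c * A i j + c^* * A j i = 0.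
  have := A0 (delta_mx i 0 + c *: delta_mx j 0).
  rewrite qformDZ !sform_delta.
  have := A0 (delta_mx i 0); have := A0 (delta_mx j 0).
  rewrite /qform !sform_delta => -> ->.
  by rewrite mulr0 add0r addr0.
have := offdiag 1; have := offdiag 'i.
rewrite conjCi rmorph1 !mul1r mulNr -mulrBr => /eqP.
rewrite mulf_eq0 (negPf (neq0Ci _)) /= subr_eq0 => /eqP ->.
by rewrite -mulr2n => /eqP; rewrite mulrn_eq0 => /eqP.
Qed.

Lemma psd_hermitian p (A : 'M[C]_p) : psd A -> mxadj A = A.
Proof.
move=> psdA; apply/eqP; rewrite -subr_eq0; apply/eqP/qform_eq0 => v.
by rewrite qformB qform_adj geC0_conj ?subrr //; apply: psdA.
Qed.

Lemma psd1 p : psd (1%:M : 'M[C]_p).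
Proof.
move=> v; rewrite mulmx1 mxE; apply: sumr_ge0 => i _.
by rewrite !mxE mulrC mul_conjC_ge0.
Qed.

Lemma psd_mulmx_adj p q (B : 'M[C]_(q, p)) (A : 'M[C]_p) :
  psd A -> psd (B *m A *m mxadj B).
Proof.
by move=> psdA v; have := psdA (mxadj B *m v); rewrite mxadj_mul mxadjK !mulmxA.
Qed.

Lemma psd_rank1 p (v : 'cV[C]_p) : psd (v *m mxadj v).
Proof. by have := psd_mulmx_adj v (@psd1 1); rewrite mulmx1. Qed.

Lemma psd_sum p I (r : seq I) (P : pred I) (F : I -> 'M[C]_p) :
  (forall i, P i -> psd (F i)) -> psd (\sum_(i <- r | P i) F i).
Proof.
move=> psdF v; rewrite mulmx_sumr mulmx_suml summxE.
by apply: sumr_ge0 => i /psdF.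
Qed.

Lemma psd_factor p (A : 'M[C]_p) : psd A -> exists B : 'M[C]_p, A = B *m mxadj B.
Proof.
move=> psdA.
have : A \is normalmx by apply/normalmxP; rewrite -mxadjE psd_hermitian.
have P_unitary := spectral_unitarymx A.
move/orthomx_spectralP; rewrite invmx_unitary // -mxadjE.
set P := spectralmx A; set d := spectral_diag A => defA.
have PadjP : P *m mxadj P = 1%:M by rewrite mxadjE; apply/unitarymxP.
have d_ge0 i : 0 <= d 0 i.
  have := psdA (mxadj P *m delta_mx i 0).
  rewrite defA mxadj_mul mxadjK !mulmxA -!(mulmxA _ P) PadjP !mulmx1.
  by rewrite -/(sform _ _ _) sform_delta mxE eqxx mulr1n.
exists (mxadj P *m diag_mx (map_mx sqrtC d)).
rewrite {1}defA mxadj_mul mxadjK !mulmxA; congr (_ *m P).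
rewrite -mulmxA; congr (_ *m _); apply/matrixP => i j; rewrite mul_diag_mx !mxE.
rewrite eq_sym; case: eqP => [->|_]; last by rewrite rmorph0 mulr0.
by rewrite !mulr1n geC0_conj ?sqrtC_ge0 // -expr2 sqrtCK.
Qed.
End Psd.

Section KronId.
Variable C : numClosedFieldType.

(* [kron_id p T] is T (x) 1_p in the block layout used by [id2_tensor]. *)
Definition kron_id p (T : 'M[C]_2) : 'M[C]_(p + p) :=
  block_mx (T 0 0)%:M (T 0 1)%:M (T 1 0)%:M (T 1 1)%:M.

Lemma kron_id_mul_col p (T : 'M[C]_2) (u0 u1 : 'cV[C]_p) :
  kron_id p T *m col_mx u0 u1 =
  col_mx (T 0 0 *: u0 + T 0 1 *: u1) (T 1 0 *: u0 + T 1 1 *: u1).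
Proof. by rewrite mul_block_col !mul_scalar_mx. Qed.

Lemma mxadj_kron_id p (T : 'M[C]_2) :
  mxadj (kron_id p T) =
  block_mx (T 0 0)^*%:M (T 1 0)^*%:M (T 0 1)^*%:M (T 1 1)^*%:M.
Proof. by rewrite mxadj_block !mxadj_scalar. Qed.

Lemma unitarymx_orthonormal2 p (S : 'M[C]_(2, p)) :
  S \is unitarymx -> orthonormal2 (row 0 S)^T (row 1 S)^T.
Proof.
move=> /unitarymxP SSadj.
have rowS_dot i j : mxadj (row i S)^T *m (row j S)^T = ((S *m S^t*) j i)%:M.
  apply/matrixP => x y; rewrite !ord1 !mxE eqxx mulr1n.
  by apply: eq_bigr => k _; rewrite !mxE mulrC.
by rewrite /orthonormal2 !rowS_dot SSadj !mxE /= raddf0.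
Qed.

Lemma orthonormal2_decomposition p : (2 <= p)%N -> forall phi : 'cV[C]_(p + p),
  exists T b0 b1, orthonormal2 b0 b1 /\ phi = kron_id p T *m col_mx b0 b1.
Proof.
move=> le2p phi.
pose A : 'M[C]_(2, p) :=
  \matrix_(i < 2) (if i == 0 then usubmx phi else dsubmx phi)^T.
set S := schmidt A; have [D defA] := submxP (schmidt_sub A).
exists D, (row 0 S)^T, (row 1 S)^T.
split; first exact/unitarymx_orthonormal2/schmidt_unitarymx.
have rowA i : (row i A)^T = D i 0 *: (row 0 S)^T + D i 1 *: (row 1 S)^T.
  have -> : (0 : 'I_2) = widen_ord (leqnSn 1) ord0 by apply: val_inj.
  have -> : (1 : 'I_2) = ord_max by apply: val_inj.
  rewrite defA row_mul mulmx_sum_row big_ord_recr big_ord1 /= linearD !linearZ.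
  by rewrite !mxE.
by rewrite kron_id_mul_col -!rowA !rowK /= !trmxK vsubmxK.
Qed.

End KronId.

Section Id2Tensor.
Variables (C : numClosedFieldType) (n m : nat) (L : {linear 'M[C]_n -> 'M[C]_m}).

Lemma id2_tensorD (X Y : 'M[C]_(n + n)) :
  id2_tensor L (X + Y) = id2_tensor L X + id2_tensor L Y.
Proof.
rewrite -[X]submxK -[Y]submxK add_block_mx /id2_tensor !block_mxKul !block_mxKur.
by rewrite !block_mxKdl !block_mxKdr !linearD add_block_mx.
Qed.

Lemma id2_tensor_sum I (r : seq I) (P : pred I) (F : I -> 'M[C]_(n + n)) :
  id2_tensor L (\sum_(i <- r | P i) F i) = \sum_(i <- r | P i) id2_tensor L (F i).
Proof.
apply: (big_morph _ id2_tensorD).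
by apply: (@addIr _ (id2_tensor L 0)); rewrite -id2_tensorD !add0r.
Qed.

Lemma id2_tensor_kron (T : 'M[C]_2) (X : 'M[C]_(n + n)) :
  id2_tensor L (kron_id n T *m X *m mxadj (kron_id n T)) =
  kron_id m T *m id2_tensor L X *m mxadj (kron_id m T).
Proof.
rewrite -[X]submxK !mxadj_kron_id /kron_id !mulmx_block /id2_tensor.
rewrite !block_mxKul !block_mxKur !block_mxKdl !block_mxKdr.
rewrite !(mul_scalar_mx, mul_mx_scalar) !(linearD, linearZ) /=.
by congr block_mx; apply/matrixP => i j; rewrite !mxE; ring.
Qed.
End Id2Tensor.

Theorem lemma7 (C : numClosedFieldType) (n m : nat) (hn : (2 <= n)%N)
  (L : {linear 'M[C]_n -> 'M[C]_m}) (hpos : positive_map L) :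
  two_positive L <->
  (forall b0 b1 : 'cV[C]_n, orthonormal2 b0 b1 ->
     let Psi : 'cV[C]_(n + n) := col_mx b0 b1 in
     psd (id2_tensor L (Psi *m mxadj Psi))).
Proof.
split=> [L2pos b0 b1 _ | Lpos_Psi X /psd_factor [B ->]].
  exact/L2pos/psd_rank1.
rewrite mulmx_adj_sum_col id2_tensor_sum; apply: psd_sum => i _.
have [T [b0 [b1 [orth_b ->]]]] := orthonormal2_decomposition hn (col i B).
rewrite mxadj_mul !mulmxA -(mulmxA _ (col_mx b0 b1)) id2_tensor_kron.
exact/psd_mulmx_adj/(Lpos_Psi _ _ orth_b).
Qed.
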